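(* Consider a linear binary non-uniform $C^0$-convergent subdivision scheme with fixed mask size, $n_0$ initial control points forming $\bar p^0\in\mathbb{R}^{n_0\times m}$, and location-dependent $n_0\times n_0$ matrices $S^{[k]}_{\eta_k}$, $\eta_k\in\{1,2\}^k$, as described in the context. Define the binary tree of maps $f_r(A)=AS^{[1]}_r\bar p^0$ ($r=1,2$, $A\in\mathbb{R}^{n_0}$ a row vector, values in $\mathbb{R}^m$) and, for $k>1$, $f_{\eta_k}(A)=AS^{[k]}_{\eta_k}$ on $\mathbb{R}^{n_0}$. Then for every $\eta\in\{1,2\}^{\mathbb{N}}$ and every $A\in K^{n_0-1}$ the limit $$\gamma(\eta)=\lim_{k\to\infty}f_{\tau_1\eta}\circ f_{\tau_2\eta}\circ\cdots\circ f_{\tau_k\eta}(A)=\lim_{k\to\infty}AS^{[k]}_{\tau_k\eta}\cdots S^{[2]}_{\tau_2\eta}S^{[1]}_{\tau_1\eta}\bar p^0$$ exists and is independent of $A$, and the attractor $U_{TM}=\bigcup_{\eta}\gamma(\eta)$ equals the limit curve in $\mathbb{R}^m$ of the non-uniform scheme started from $\bar p^0$.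
   Context: $\tau_\ell\eta$ is the truncation of $\eta$ to its first $\ell$ symbols. $K^{n_0-1}=\{(x_1,\ldots,x_{n_0})\in\mathbb{R}^{n_0}:\sum_ix_i=1\}$. The matrices are defined recursively: $S^{[1]}_1$ (resp. $S^{[1]}_2$) generates from $\bar p^0$ the first (resp. last) $n_0$ points at level 1; with $\bar p_{\eta_k}=S^{[k]}_{i_1\ldots i_k}\cdots S^{[2]}_{i_1i_2}S^{[1]}_{i_1}\bar p^0$ the $n_0$ points at level $k$ attached to location $\eta_k=(i_1\ldots i_k)$, the matrices $S^{[k+1]}_{\eta_k1}$ and $S^{[k+1]}_{\eta_k2}$ generate the first and last $n_0$ points obtained by applying the (location-dependent) refinement rules to $\bar p_{\eta_k}$. $C^0$-convergence means that for each $\eta$ the matrices $\bar p_{\tau_k\eta}$ converge to an $n_0\times m$ matrix with all rows equal to a point $q_\eta$, and the limit curve is $\bigcup_\eta q_\eta$. *)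

From Stdlib Require Import Reals List.
Import ListNotations.
Open Scope R_scope.

(* Matrices are functions of (row, column) indices; only indices below the
   stated dimensions are meaningful.  Points of R^m are functions nat -> R,
   meaningful on coordinates j < m. *)
Definition mat := nat -> nat -> R.

Definition sumR (n : nat) (f : nat -> R) : R :=
  fold_right Rplus 0 (map f (seq 0 n)).

Definition mmul (n : nat) (A B : mat) : mat :=
  fun i j => sumR n (fun l => A i l * B l j).

Definition rvmul (n : nat) (A : nat -> R) (B : mat) : nat -> R :=
  fun j => sumR n (fun l => A l * B l j).

(* An infinite binary word eta : {1,2}^N is encoded as nat -> bool
   (false = symbol 1, true = symbol 2), eta 0 being the first symbol.
   tau k eta = truncation of eta to its first k symbols. *)
Definition tau (k : nat) (eta : nat -> bool) : list bool := map eta (seq 0 k).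

(* Refinement matrices: S k loc is the n0 x n0 matrix S^[k]_{loc} for a
   location loc of length k (k >= 1).
   pbar S p0 n0 k eta = S^[k]_{tau_k eta} ... S^[1]_{tau_1 eta} p0
   (the n0 points at level k attached to tau_k eta); level 0 is p0. *)
Fixpoint pbar (n0 : nat) (S : nat -> list bool -> mat) (p0 : mat)
  (k : nat) (eta : nat -> bool) : mat :=
  match k with
  | O => p0
  | Datatypes.S k' => mmul n0 (S (Datatypes.S k') (tau (Datatypes.S k') eta))
                        (pbar n0 S p0 k' eta)
  end.

Definition C0_convergent (n0 m : nat) (S : nat -> list bool -> mat) (p0 : mat)
  : Prop :=
  forall eta : nat -> bool, exists q : nat -> R,
    forall i j, (i < n0)%nat -> (j < m)%nat ->
      Un_cv (fun k => pbar n0 S p0 k eta i j) (q j).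

Definition is_limit_point (n0 m : nat) (S : nat -> list bool -> mat) (p0 : mat)
  (eta : nat -> bool) (x : nat -> R) : Prop :=
  forall i j, (i < n0)%nat -> (j < m)%nat ->
    Un_cv (fun k => pbar n0 S p0 k eta i j) (x j).

Definition limit_curve (n0 m : nat) (S : nat -> list bool -> mat) (p0 : mat)
  (x : nat -> R) : Prop :=
  exists eta, is_limit_point n0 m S p0 eta x.

Definition inK (n0 : nat) (A : nat -> R) : Prop := sumR n0 A = 1.

(* f_{tau_1 eta} o ... o f_{tau_k eta} (A) = A S^[k]_{tau_k eta} ... S^[1] p0 *)
Definition tm_iter (n0 : nat) (S : nat -> list bool -> mat) (p0 : mat)
  (k : nat) (eta : nat -> bool) (A : nat -> R) : nat -> R :=
  rvmul n0 A (pbar n0 S p0 k eta).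

Definition is_gamma (n0 m : nat) (S : nat -> list bool -> mat) (p0 : mat)
  (eta : nat -> bool) (A : nat -> R) (x : nat -> R) : Prop :=
  forall j, (j < m)%nat -> Un_cv (fun k => tm_iter n0 S p0 k eta A j) (x j).

From Stdlib Require Import Reals List Lra Lia.
Open Scope R_scope.

(* The row vector A S^[k]_{tau_k eta} ... S^[1] p0 is the combination, with
   weights A, of the n0 rows of pbar_{tau_k eta}.  By C^0-convergence all
   these rows tend to the same point q_eta, so for weights summing to one the
   combination tends to q_eta whatever A is: gamma(eta) = q_eta.  Since
   K^{n0-1} is nonempty for n0 >= 1 (it contains the barycentric weights),
   gamma(eta) in turn determines q_eta, and the attractor is the limit curve. *)

Lemma Un_cv_const (c : R) : Un_cv (fun _ => c) c.
Proof.
  intros e He; exists 0%nat; intros n _.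
  unfold R_dist; rewrite Rminus_diag, Rabs_R0; lra.
Qed.

Lemma Un_cv_fold_weighted_sum (A : nat -> R) (u : nat -> nat -> R) (q : R)
  (s : list nat) :
  (forall l, In l s -> Un_cv (u l) q) ->
  Un_cv (fun k => fold_right Rplus 0 (map (fun l => A l * u l k) s))
        (fold_right Rplus 0 (map A s) * q).
Proof.
  induction s as [|a s IH]; intros Hu; simpl.
  - rewrite Rmult_0_l; apply Un_cv_const.
  - rewrite Rmult_plus_distr_r.
    apply CV_plus.
    + apply CV_mult; [apply Un_cv_const | apply Hu; now left].
    + apply IH; intros l Hl; apply Hu; now right.
Qed.

Lemma Un_cv_sumR_weighted (n : nat) (A : nat -> R) (u : nat -> nat -> R)
  (q : R) :
  (forall l, (l < n)%nat -> Un_cv (u l) q) ->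
  Un_cv (fun k => sumR n (fun l => A l * u l k)) (sumR n A * q).
Proof.
  intros Hu; apply Un_cv_fold_weighted_sum.
  intros l Hl; apply in_seq in Hl; apply Hu; lia.
Qed.

Lemma sumR_const (n : nat) (c : R) : sumR n (fun _ => c) = INR n * c.
Proof.
  unfold sumR; rewrite <- (length_seq n 0) at 2.
  induction (seq 0 n) as [|a s IH]; cbn [map fold_right length]; [simpl; ring|].
  rewrite IH, S_INR; ring.
Qed.

Lemma inK_barycentre (n0 : nat) : (1 <= n0)%nat -> inK n0 (fun _ => / INR n0).
Proof.
  intros Hn0; unfold inK; rewrite sumR_const.
  apply Rinv_r, not_0_INR; lia.
Qed.

Lemma is_gamma_limit_point n0 m S p0 eta q A :
  is_limit_point n0 m S p0 eta q -> inK n0 A -> is_gamma n0 m S p0 eta A q.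
Proof.
  intros Hq HA j Hj.
  rewrite <- (Rmult_1_l (q j)), <- HA.
  apply Un_cv_sumR_weighted; intros l Hl; now apply Hq.
Qed.

Lemma is_gamma_unique n0 m S p0 eta A x y :
  is_gamma n0 m S p0 eta A x -> is_gamma n0 m S p0 eta A y ->
  forall j, (j < m)%nat -> x j = y j.
Proof. intros Hx Hy j Hj; exact (UL_sequence _ _ _ (Hx j Hj) (Hy j Hj)). Qed.

Theorem mainTheorem12 (n0 m : nat) (S : nat -> list bool -> mat) (p0 : mat)
  (Hn0 : (1 <= n0)%nat)
  (Hconv : C0_convergent n0 m S p0) :
  (forall eta : nat -> bool, exists g : nat -> R,
     forall A : nat -> R, inK n0 A -> is_gamma n0 m S p0 eta A g)
  /\
  (forall x : nat -> R,
     (exists eta : nat -> bool,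
        forall A : nat -> R, inK n0 A -> is_gamma n0 m S p0 eta A x)
     <-> limit_curve n0 m S p0 x).
Proof.
  split.
  - intros eta; destruct (Hconv eta) as [q Hq]; exists q.
    intros A HA; now apply is_gamma_limit_point.
  - intros x; split.
    + intros [eta Hx]; exists eta; destruct (Hconv eta) as [q Hq].
      pose proof (inK_barycentre n0 Hn0) as Hbar.
      assert (Hxq : forall j, (j < m)%nat -> x j = q j).
      { apply (is_gamma_unique n0 m S p0 eta _ x q (Hx _ Hbar)).
        now apply is_gamma_limit_point. }
      intros i j Hi Hj; rewrite Hxq by exact Hj; now apply Hq.
    + intros [eta Hx]; exists eta; intros A HA.
      now apply is_gamma_limit_point.
Qed.
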